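(* Let $q\equiv 3 \pmod 4$ be a prime power and let $P=\{(x,y,z)\in\mathbb{F}_q^3 : z=x^2+y^2\}$. There are absolute constants $C,c>0$ such that for every set $X\subset P$ with $|X|\ge C q^{5/3}$ we have \[\mathcal{E}_{\mathtt{nt}}^+(X)\ge c\,\frac{|X|^4}{q^3}.\]
   Context: For $X\subset P$, $\mathcal{E}_{\mathtt{nt}}^+(X)$ denotes the number of non-trivial energy tuples in $X$, i.e. the number of tuples $(a,b,c,d)\in X^4$ with $a+b=c+d$ and $a,b,c,d$ pairwise distinct. The paper writes $|X|\gg q^{5/3}$ and $\gg$ for inequalities up to absolute positive constants. *)

From mathcomp Require Import all_boot all_order all_algebra all_field.
From Stdlib Require Import Reals.
Set Implicit Arguments. Unset Strict Implicit. Unset Printing Implicit Defensive.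
Import GRing.Theory.

Section Defs.
Variable F : finFieldType.
Local Open Scope ring_scope.

(* points of F_q^3, written ((x, y), z) *)
Definition pt := (F * F * F)%type.

Definition add3 (a b : pt) : pt :=
  ((a.1.1 + b.1.1, a.1.2 + b.1.2), a.2 + b.2).

Definition paraboloid : {set pt} :=
  [set p : pt | p.2 == p.1.1 ^+ 2 + p.1.2 ^+ 2].

Definition energy_nt (X : {set pt}) : nat :=
  #|[set t : pt * pt * pt * pt |
      let: (a, b, c, d) := t in
      [&& a \in X, b \in X, c \in X, d \in X,
          add3 a b == add3 c d,
          a != b, a != c, a != d, b != c, b != d & c != d]]|.
End Defs.

(* By Cauchy-Schwarz over the q^3 possible values of a + b, any X in F_q^3 has
   additive energy at least |X|^4 / q^3, while the quadruples with a repeated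
   entry number at most 4 |X|^2, which is negligible once |X| >> q^(3/2). *)

From HB Require Import structures.
From mathcomp Require Import all_boot all_order all_algebra all_field.
From Stdlib Require Import Reals Lra.
(* Reals rebinds [_ ^ _] in nat_scope to Nat.pow; this restores [expn]. *)
From mathcomp Require Import ssrnat.
Set Implicit Arguments. Unset Strict Implicit. Unset Printing Implicit Defensive.
Import GRing.Theory.

Lemma sqr_sum_leq_card_mul_sum_sqr (I : finType) (f : I -> nat) :
  (\sum_i f i) ^ 2 <= #|I| * \sum_i f i ^ 2.
Proof.
have AM_GM : \sum_i \sum_j 2 * (f i * f j) <= \sum_i \sum_j (f i ^ 2 + f j ^ 2).
  by apply: leq_sum => i _; apply: leq_sum => j _; exact: nat_Cauchy.
have E1 : \sum_i \sum_j 2 * (f i * f j) = 2 * (\sum_i f i) ^ 2.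
  rewrite -mulnn big_distrl big_distrr /=; apply: eq_bigr => i _.
  by rewrite !big_distrr.
have E2 : \sum_i \sum_j (f i ^ 2 + f j ^ 2) = 2 * (#|I| * \sum_i f i ^ 2).
  under eq_bigr do rewrite big_split /= sum_nat_const.
  by rewrite big_split /= sum_nat_const -big_distrr /= mul2n -addnn.
by rewrite E1 E2 leq_pmul2l in AM_GM.
Qed.

Section AdditiveEnergy.
Local Open Scope ring_scope.
Variables (G : finZmodType) (A : {set G}).

Definition rep_set (s : G) : {set G * G} := [set p in setX A A | p.1 + p.2 == s].

Definition energy_set : {set (G * G) * (G * G)} :=
  [set u in setX (setX A A) (setX A A) | u.1.1 + u.1.2 == u.2.1 + u.2.2].

Definition nontrivial_energy_set : {set G * G * G * G} :=
  [set t | let: (a, b, c, d) := t in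
      [&& a \in A, b \in A, c \in A, d \in A, a + b == c + d,
          a != b, a != c, a != d, b != c, b != d & c != d]].

Definition pair_up (t : G * G * G * G) : (G * G) * (G * G) :=
  ((t.1.1.1, t.1.1.2), (t.1.2, t.2)).

Lemma sum_card_rep_set : (\sum_s #|rep_set s| = #|A| ^ 2)%N.
Proof.
rewrite -mulnn -cardsX -sum1_card (partition_big (fun p => p.1 + p.2) predT) //=.
by apply: eq_bigr => s _; rewrite -sum1_card; apply: eq_bigl => p; rewrite inE.
Qed.

Lemma sum_sqr_card_rep_set : (\sum_s #|rep_set s| ^ 2 = #|energy_set|)%N.
Proof.
rewrite -sum1_card (partition_big (fun u => u.1.1 + u.1.2) predT) //=.
apply: eq_bigr => s _; rewrite -mulnn -cardsX -sum1_card; apply: eq_bigl.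
move=> [[a b] [c d]]; rewrite !inE /=.
have [<-|_] := eqVneq (a + b) s; last by rewrite !andbF.
by rewrite eq_sym !andbT !andbA.
Qed.

Lemma card_energy_set_lower_bound : (#|A| ^ 4 <= #|G| * #|energy_set|)%N.
Proof.
rewrite -sum_sqr_card_rep_set (_ : 4 = 2 * 2)%N // expnM -sum_card_rep_set.
exact: sqr_sum_leq_card_mul_sum_sqr.
Qed.

Lemma card_imset_setX_le (T : finType) (f : G * G -> T) :
  (#|f @: setX A A| <= #|A| ^ 2)%N.
Proof. by rewrite -mulnn -cardsX leq_imset_card. Qed.

(* A degenerate quadruple is determined by two of its entries: [a = b] forces
   [d = 2a - c], [c = d] forces [b = 2c - a], and any other coincidence pairs
   the entries off. *)
Lemma energy_set_degenerate_cover :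
  energy_set \subset pair_up @: nontrivial_energy_set
    :|: [set (p, p) | p in setX A A]
    :|: [set (p, (p.2, p.1)) | p in setX A A]
    :|: [set ((p.1, p.1), (p.2, p.1 + p.1 - p.2)) | p in setX A A]
    :|: [set ((p.1, p.2 + p.2 - p.1), (p.2, p.2)) | p in setX A A].
Proof.
apply/subsetP => -[[a b] [c d]] /setIdP[/setXP[/setXP[aA bA] /setXP[cA dA]] /= /eqP abcd].
have acA : (a, c) \in setX A A by rewrite inE aA cA.
have abA : (a, b) \in setX A A by rewrite inE aA bA.
rewrite !in_setU.
have [ab|nab] := eqVneq a b.
  subst b; have -> : d = a + a - c by rewrite abcd addrC addKr.
  by rewrite (imset_f (fun p => ((p.1, p.1), (p.2, p.1 + p.1 - p.2))) acA) !orbT.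
have [cd|ncd] := eqVneq c d.
  subst d; have -> : b = c + c - a by rewrite -abcd addrC addKr.
  by rewrite (imset_f (fun p => ((p.1, p.2 + p.2 - p.1), (p.2, p.2))) acA) !orbT.
have [ac|nac] := eqVneq a c.
  subst c; move/addrI: abcd => <-.
  by rewrite (imset_f (fun p => (p, p)) abA) !orbT.
have [ad|nad] := eqVneq a d.
  subst d; move: abcd; rewrite [c + a]addrC => /addrI <-.
  by rewrite (imset_f (fun p => (p, (p.2, p.1))) abA) !orbT.
have [bc|nbc] := eqVneq b c.
  subst c; move: abcd; rewrite [b + d]addrC => /addIr <-.
  by rewrite (imset_f (fun p => (p, (p.2, p.1))) abA) !orbT.
have [bd|nbd] := eqVneq b d.
  by subst d; move/addIr: abcd => <-; rewrite (imset_f (fun p => (p, p)) abA) !orbT.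
have nontriv : (a, b, c, d) \in nontrivial_energy_set.
  by rewrite inE aA bA cA dA abcd eqxx nab nac nad nbc nbd ncd.
by rewrite (imset_f pair_up nontriv).
Qed.

Lemma card_energy_set_le_nontrivial :
  (#|energy_set| <= #|nontrivial_energy_set| + 4 * #|A| ^ 2)%N.
Proof.
apply: leq_trans (subset_leq_card energy_set_degenerate_cover) _.
rewrite !mulSn mul0n addn0 !addnA.
do 4 apply: leq_trans (leq_card_setU _ _) (leq_add _ (card_imset_setX_le _)).
exact: leq_imset_card.
Qed.

End AdditiveEnergy.

(* Makes [pt F] a finZmodType whose addition is [add3]. *)
HB.saturate prod.

Lemma energy_ntE (F : finFieldType) (X : {set pt F}) :
  energy_nt X = #|nontrivial_energy_set X|.
Proof. by []. Qed.

Lemma energy_nt_lower_bound (F : finFieldType) (X : {set pt F}) :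
  #|X| ^ 4 <= #|F| ^ 3 * (energy_nt X + 4 * #|X| ^ 2).
Proof.
rewrite energy_ntE.
apply: leq_trans (card_energy_set_lower_bound X) _.
rewrite !card_prod -[#|F| ^ 3]/(#|F| * (#|F| * #|F|)) mulnA leq_mul2l.
by rewrite card_energy_set_le_nontrivial orbT.
Qed.

Lemma half_quartic_div_cube_le (N Q E : R) :
  (1 <= Q)%R -> (N ^ 4 <= Q ^ 3 * (E + 4 * N ^ 2))%R ->
  (4 * Rpower Q (5 / 3) <= N)%R -> (1 / 2 * N ^ 4 / Q ^ 3 <= E)%R.
Proof.
move=> Q_ge1 N4_le N_ge.
have P_gt0 : (0 < Rpower Q (5 / 3))%R by apply: exp_pos.
have cube_le : (Q ^ 3 <= Rpower Q (5 / 3) ^ 2)%R.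
  rewrite -!Rpower_pow; try lra.
  rewrite Rpower_mult; apply: Rle_Rpower => //=; lra.
have Q3_gt0 : (0 < Q ^ 3)%R by apply: pow_lt; lra.
have N2_ge : (16 * Q ^ 3 <= N ^ 2)%R by nra.
rewrite /Rdiv; apply: (Rmult_le_reg_r (Q ^ 3)) => //.
rewrite Rmult_assoc Rinv_l ?Rmult_1_r; nra.
Qed.

Theorem theorem1p2 :
  exists C c : R, (0 < C)%R /\ (0 < c)%R /\
  forall (F : finFieldType), #|F| %% 4 = 3 ->
  forall X : {set pt F}, X \subset paraboloid F ->
  (C * Rpower (INR #|F|) (5 / 3) <= INR #|X|)%R ->
  (c * (INR #|X| ^ 4) / (INR #|F| ^ 3) <= INR (energy_nt X))%R.
Proof.
exists 4%R, (1 / 2)%R; split; [lra | split; [lra |]].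
move=> F _ X _ X_large; apply: half_quartic_div_cube_le X_large.
  by apply: (le_INR 1); apply/leP; exact: ltnW (card_finNzRing_gt1 F).
have /leP/le_INR := energy_nt_lower_bound X.
rewrite !mult_INR plus_INR !mult_INR (_ : INR 4 = 4%R); last by simpl; lra.
by move=> ?; nra.
Qed.
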